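(* The variety $\mathcal{WHB}$ of WHB-algebras has the Maehara interpolation property: for any set of variables $Y$, whenever $\Sigma\cup\Gamma\cup\{\varepsilon\}\subseteq Eq(Y)$ with $Var(\Sigma)\cap Var(\Gamma\cup\{\varepsilon\})\neq\emptyset$ and $\Sigma\cup\Gamma\models_{\mathcal{WHB}}\varepsilon$, there exists $\Delta\subseteq Eq(Y)$ such that $\Sigma\models_{\mathcal{WHB}}\Delta$, $\Delta\cup\Gamma\models_{\mathcal{WHB}}\varepsilon$, and $Var(\Delta)\subseteq Var(\Sigma)\cap Var(\Gamma\cup\{\varepsilon\})$.
   Context: A WHB-algebra is an algebra $(A,\wedge,\vee,\to,\leftarrow,0,1)$ such that $(A,\wedge,\vee,0,1)$ is a bounded distributive lattice and for all $a,b,c\in A$: $a\to a=1$; $a\to(b\wedge c)=(a\to b)\wedge(a\to c)$; $(a\vee b)\to c=(a\to c)\wedge(b\to c)$; $(a\to b)\wedge(b\to c)\le a\to c$; $a\leftarrow a=0$; $(a\vee b)\leftarrow c=(a\leftarrow c)\vee(b\leftarrow c)$; $a\leftarrow(b\wedge c)=(a\leftarrow b)\vee(a\leftarrow c)$; $a\leftarrow c\le(a\leftarrow b)\vee(b\leftarrow c)$; $a\wedge((a\to b)\leftarrow 0)\le b$; $a\le b\vee(1\to(a\leftarrow b))$. $Eq(Y)$ denotes the set of equations between terms in the language $\{\wedge,\vee,\to,\leftarrow,0,1\}$ over variables from $Y$; $Var(\Phi)$ is the set of variables occurring in a set of equations $\Phi$; $\Phi\models_{\mathcal{WHB}}\Psi$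 means every assignment in every WHB-algebra satisfying all equations of $\Phi$ satisfies all equations of $\Psi$. *)

Set Implicit Arguments.

Record WHB := {
  car :> Type;
  meet : car -> car -> car;
  join : car -> car -> car;
  imp : car -> car -> car;
  coimp : car -> car -> car;
  zero : car;
  one : car;
  meetA : forall a b c, meet a (meet b c) = meet (meet a b) c;
  joinA : forall a b c, join a (join b c) = join (join a b) c;
  meetC : forall a b, meet a b = meet b a;
  joinC : forall a b, join a b = join b a;
  meet_absorb : forall a b, meet a (join a b) = a;
  join_absorb : forall a b, join a (meet a b) = a;
  meet_join_distr : forall a b c, meet a (join b c) = join (meet a b) (meet a c);
  meet0 : forall a, meet a zero = zero;
  join1 : forall a, join a one = one;
  (* WHB axioms; x <= y is defined as meet x y = x *)
  imp_refl : forall a, imp a a = one;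
  imp_meet : forall a b c, imp a (meet b c) = meet (imp a b) (imp a c);
  imp_join : forall a b c, imp (join a b) c = meet (imp a c) (imp b c);
  imp_trans : forall a b c,
      meet (meet (imp a b) (imp b c)) (imp a c) = meet (imp a b) (imp b c);
  coimp_refl : forall a, coimp a a = zero;
  coimp_join : forall a b c, coimp (join a b) c = join (coimp a c) (coimp b c);
  coimp_meet : forall a b c, coimp a (meet b c) = join (coimp a b) (coimp a c);
  coimp_trans : forall a b c,
      meet (coimp a c) (join (coimp a b) (coimp b c)) = coimp a c;
  ax_mp : forall a b, meet (meet a (coimp (imp a b) zero)) b = meet a (coimp (imp a b) zero);
  ax_dmp : forall a b, meet a (join b (imp one (coimp a b))) = a
}.

Inductive term (Y : Type) : Type :=
| tvar : Y -> term Y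
| tmeet : term Y -> term Y -> term Y
| tjoin : term Y -> term Y -> term Y
| timp : term Y -> term Y -> term Y
| tcoimp : term Y -> term Y -> term Y
| tzero : term Y
| tone : term Y.
Arguments tzero {Y}.
Arguments tone {Y}.

Definition eqn (Y : Type) : Type := (term Y * term Y)%type.

Fixpoint eval {Y : Type} (A : WHB) (v : Y -> A) (t : term Y) : A :=
  match t with
  | tvar y => v y
  | tmeet t1 t2 => meet A (eval A v t1) (eval A v t2)
  | tjoin t1 t2 => join A (eval A v t1) (eval A v t2)
  | timp t1 t2 => imp A (eval A v t1) (eval A v t2)
  | tcoimp t1 t2 => coimp A (eval A v t1) (eval A v t2)
  | tzero => zero A
  | tone => one A
  end.

Definition sat {Y : Type} (A : WHB) (v : Y -> A) (e : eqn Y) : Prop :=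
  eval A v (fst e) = eval A v (snd e).

Definition entails (Y : Type) (Phi Psi : eqn Y -> Prop) : Prop :=
  forall (A : WHB) (v : Y -> A),
    (forall e, Phi e -> sat A v e) -> forall e, Psi e -> sat A v e.

Fixpoint occurs (Y : Type) (y : Y) (t : term Y) : Prop :=
  match t with
  | tvar x => x = y
  | tmeet t1 t2 | tjoin t1 t2 | timp t1 t2 | tcoimp t1 t2 =>
      occurs y t1 \/ occurs y t2
  | tzero | tone => False
  end.

Definition Var (Y : Type) (Phi : eqn Y -> Prop) (y : Y) : Prop :=
  exists e, Phi e /\ (occurs y (fst e) \/ occurs y (snd e)).

Definition setU (Y : Type) (P Q : eqn Y -> Prop) : eqn Y -> Prop :=
  fun e => P e \/ Q e.

Definition set1 (Y : Type) (e0 : eqn Y) : eqn Y -> Prop := fun e => e = e0.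

(* The interpolant consists of all consequences of Sigma that are equations between
   terms in the common variables.  Suppose a valuation v in a WHB-algebra A satisfies the
   interpolant and Gamma but not eps, and let Z be a prime filter of A separating the two
   sides of eps.  Because v satisfies the interpolant, the trace of Z on common-variable
   terms is consistent with Sigma, so some prime filter X of the Lindenbaum algebra of Sigma
   agrees with Z on those terms.  The pairs of agreeing prime filters, related
   componentwise by the canonical relation, form a Kripke frame; since agreement lifts
   along the canonical relation in both directions, the truth lemmas hold in each
   component.  In the complex algebra of this frame, reading the variables of Sigma from
   the first component and all others from the second, Sigma and Gamma hold while eps
   fails at the point (X, Z). *)

From Stdlib Require Import Classical FunctionalExtensionality PropExtensionality ProofIrrelevance ClassicalEpsilon.
From mathcomp Require classical_sets.

Lemma pred_ext (T : Type) (P Q : T -> Prop) : (forall x, P x <-> Q x) -> P = Q.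
Proof.
  intro H. apply functional_extensionality; intro x.
  apply propositional_extensionality, H.
Qed.

Lemma zorn_maximal (T : Type) (P : (T -> Prop) -> Prop) :
  (forall C : (T -> Prop) -> Prop, (forall X, C X -> P X) ->
     (forall X X', C X -> C X' -> (forall x, X x -> X' x) \/ (forall x, X' x -> X x)) ->
     P (fun x => exists X, C X /\ X x)) ->
  exists M, P M /\ forall X, P X -> (forall x, M x -> X x) -> forall x, X x -> M x.
Proof.
  intro Hchain.
  destruct (classical_sets.Zorn_bigcup (P := P)) as [M [PM Mmax]].
  - intros C CP Ctot.
    replace (classical_sets.bigcup C (fun X => X)) with (fun x => exists X, C X /\ X x).
    + exact (Hchain C CP Ctot).
    + apply pred_ext; intro x; split.
      * intros [X [CX Xx]]; exists X; assumption.
      * intros [X CX Xx]; exists X; split; assumption.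
  - exists M; split; [exact PM|].
    intros X PX MX x Xx. apply NNPP; intro nMx.
    apply (Mmax X); [|exact PX].
    split; [exact MX|]. intro XM. exact (nMx (XM x Xx)).
Qed.

Record dlattice := {
  lcar :> Type;
  lmeet : lcar -> lcar -> lcar;
  ljoin : lcar -> lcar -> lcar;
  lbot : lcar;
  ltop : lcar;
  lmeetA : forall a b c, lmeet a (lmeet b c) = lmeet (lmeet a b) c;
  ljoinA : forall a b c, ljoin a (ljoin b c) = ljoin (ljoin a b) c;
  lmeetC : forall a b, lmeet a b = lmeet b a;
  ljoinC : forall a b, ljoin a b = ljoin b a;
  lmeet_absorb : forall a b, lmeet a (ljoin a b) = a;
  ljoin_absorb : forall a b, ljoin a (lmeet a b) = a;
  lmeet_joinDr : forall a b c, lmeet a (ljoin b c) = ljoin (lmeet a b) (lmeet a c);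
  lmeet_bot : forall a, lmeet a lbot = lbot;
  ljoin_top : forall a, ljoin a ltop = ltop
}.

Canonical Structure whb_lattice (A : WHB) : dlattice :=
  Build_dlattice A (meet A) (join A) (zero A) (one A) (meetA A) (joinA A)
    (meetC A) (joinC A) (meet_absorb A) (join_absorb A) (meet_join_distr A)
    (meet0 A) (join1 A).

Section LatticeTheory.
Context {L : dlattice}.
Implicit Types x y z : L.

Definition lle x y := lmeet L x y = x.

Lemma lmeet_id x : lmeet L x x = x.
Proof. rewrite <- (ljoin_absorb L x x) at 2. apply lmeet_absorb. Qed.

Lemma lleE x y : lle x y <-> ljoin L x y = y.
Proof.
  unfold lle; split; intro H.
  - rewrite <- H, ljoinC, lmeetC. apply ljoin_absorb.
  - rewrite <- H. apply lmeet_absorb.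
Qed.

Lemma lle_refl x : lle x x.
Proof. apply lmeet_id. Qed.

Lemma lle_trans {x y z} : lle x y -> lle y z -> lle x z.
Proof. unfold lle; intros Hxy Hyz. rewrite <- Hxy, <- lmeetA, Hyz. reflexivity. Qed.

Lemma lle_anti {x y} : lle x y -> lle y x -> x = y.
Proof. unfold lle; intros Hxy Hyx. rewrite <- Hxy, lmeetC. exact Hyx. Qed.

Lemma lle_meetl x y : lle (lmeet L x y) x.
Proof. unfold lle. rewrite (lmeetC L _ x), lmeetA, lmeet_id. reflexivity. Qed.

Lemma lle_meetr x y : lle (lmeet L x y) y.
Proof. unfold lle. rewrite <- lmeetA, lmeet_id. reflexivity. Qed.

Lemma lle_meet {x y z} : lle z x -> lle z y -> lle z (lmeet L x y).
Proof. unfold lle; intros Hx Hy. rewrite lmeetA, Hx, Hy. reflexivity. Qed.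

Lemma lle_joinl x y : lle x (ljoin L x y).
Proof. apply lmeet_absorb. Qed.

Lemma lle_joinr x y : lle y (ljoin L x y).
Proof. rewrite ljoinC. apply lmeet_absorb. Qed.

Lemma lle_join {x y z} : lle x z -> lle y z -> lle (ljoin L x y) z.
Proof. rewrite !lleE; intros Hx Hy. rewrite <- ljoinA, Hy, Hx. reflexivity. Qed.

Lemma lle_bot x : lle (lbot L) x.
Proof. unfold lle. rewrite lmeetC. apply lmeet_bot. Qed.

Lemma lle_top x : lle x (ltop L).
Proof. apply lleE, ljoin_top. Qed.

Lemma lle_meet2 {x y x' y'} : lle x x' -> lle y y' -> lle (lmeet L x y) (lmeet L x' y').
Proof.
  intros; apply lle_meet.
  - apply (lle_trans (y := x)); [apply lle_meetl|assumption].
  - apply (lle_trans (y := y)); [apply lle_meetr|assumption].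
Qed.

Lemma lle_join2 {x y x' y'} : lle x x' -> lle y y' -> lle (ljoin L x y) (ljoin L x' y').
Proof.
  intros; apply lle_join.
  - apply (lle_trans (y := x')); [assumption|apply lle_joinl].
  - apply (lle_trans (y := y')); [assumption|apply lle_joinr].
Qed.

Lemma ljoin_meetDr x y z : ljoin L x (lmeet L y z) = lmeet L (ljoin L x y) (ljoin L x z).
Proof.
  rewrite (lmeet_joinDr L (ljoin L x y) x z), (lmeetC L (ljoin L x y) x), lmeet_absorb.
  rewrite (lmeetC L (ljoin L x y) z), lmeet_joinDr, ljoinA, (lmeetC L z x), ljoin_absorb.
  rewrite (lmeetC L z y). reflexivity.
Qed.

End LatticeTheory.

Definition dual_lattice (L : dlattice) : dlattice :=
  Build_dlattice L (ljoin L) (lmeet L) (ltop L) (lbot L) (ljoinA L) (lmeetA L)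
    (ljoinC L) (lmeetC L) (ljoin_absorb L) (lmeet_absorb L) (@ljoin_meetDr L)
    (ljoin_top L) (lmeet_bot L).

Lemma lle_dual (L : dlattice) (x y : L) : @lle (dual_lattice L) x y <-> lle y x.
Proof. rewrite (lleE y x). unfold lle; simpl. rewrite ljoinC. tauto. Qed.

Record prime_filter (L : dlattice) (F : L -> Prop) : Prop := {
  pf_top : F (ltop L);
  pf_bot : ~ F (lbot L);
  pf_up : forall x y, lle x y -> F x -> F y;
  pf_meet : forall x y, F x -> F y -> F (lmeet L x y);
  pf_prime : forall x y, F (ljoin L x y) -> F x \/ F y
}.
Arguments prime_filter {L} F.
Arguments pf_top {L F}.
Arguments pf_bot {L F}.
Arguments pf_up {L F} _ [x y].
Arguments pf_meet {L F} _ [x y].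
Arguments pf_prime {L F} _ [x y].

Section PrimeFilterTheory.
Context {L : dlattice} {F : L -> Prop}.
Hypothesis PF : prime_filter F.

Lemma pf_meetE x y : F (lmeet L x y) <-> F x /\ F y.
Proof.
  split.
  - intro H; split; [exact (pf_up PF (lle_meetl x y) H)|exact (pf_up PF (lle_meetr x y) H)].
  - intros [Hx Hy]. exact (pf_meet PF Hx Hy).
Qed.

Lemma pf_joinE x y : F (ljoin L x y) <-> F x \/ F y.
Proof.
  split; [apply (pf_prime PF)|].
  intros [H|H]; [exact (pf_up PF (lle_joinl x y) H)|exact (pf_up PF (lle_joinr x y) H)].
Qed.

End PrimeFilterTheory.

Section FilterExtension.
Context {L : dlattice}.
Variable entl : L -> L -> Prop.
Hypothesis entl_of_le : forall {x y}, lle x y -> entl x y.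
Hypothesis entl_trans : forall {x y z}, entl x y -> entl y z -> entl x z.
Hypothesis entl_meet : forall {x y y'}, entl x y -> entl x y' -> entl x (lmeet L y y').
Hypothesis entl_join : forall {x x' z}, entl x z -> entl x' z -> entl (ljoin L x x') z.
Variables G0 I : L -> Prop.
Hypothesis G0_inhabited : exists g, G0 g.
Hypothesis G0_meet : forall {x y}, G0 x -> G0 y -> G0 (lmeet L x y).
Hypothesis G0_entl : forall {x y}, G0 x -> entl x y -> G0 y.
Hypothesis I_inhabited : exists i, I i.
Hypothesis I_down : forall {x y}, lle x y -> I y -> I x.
Hypothesis I_join : forall {x y}, I x -> I y -> I (ljoin L x y).
Hypothesis G0_I_disjoint : forall {x}, G0 x -> ~ I x.

Record admissible (G : L -> Prop) : Prop := {
  adm_base : forall x, G0 x -> G x;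
  adm_meet : forall x y, G x -> G y -> G (lmeet L x y);
  adm_entl : forall x y, G x -> entl x y -> G y;
  adm_avoid : forall x, G x -> ~ I x
}.
Arguments adm_base {G}.
Arguments adm_meet {G} _ [x y].
Arguments adm_entl {G} _ [x y].
Arguments adm_avoid {G} _ [x].

(* Zorn is applied to the sets [H] such that [G0 \/ H] is admissible, so that the
   empty chain is harmless. *)
Lemma admissible_chain_union (C : (L -> Prop) -> Prop) :
  (forall X, C X -> admissible (fun x => G0 x \/ X x)) ->
  (forall X X', C X -> C X' -> (forall x, X x -> X' x) \/ (forall x, X' x -> X x)) ->
  admissible (fun x => G0 x \/ exists X, C X /\ X x).
Proof.
  intros CA Ctot.
  assert (common : forall x y, (G0 x \/ exists X, C X /\ X x) -> (G0 y \/ exists X, C X /\ X y) ->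
            (G0 x /\ G0 y) \/ exists X, C X /\ (G0 x \/ X x) /\ (G0 y \/ X y)).
  { intros x y [Gx|[X [CX Xx]]] [Gy|[X' [CX' X'y]]];
      [left; auto|right; exists X'; auto|right; exists X; auto|].
    destruct (Ctot X X' CX CX') as [XX'|X'X]; right; [exists X'|exists X]; auto. }
  constructor.
  - intros x Gx; left; exact Gx.
  - intros x y Hx Hy.
    destruct (common x y Hx Hy) as [[Gx Gy]|[X [CX [Hx' Hy']]]]; [left; auto|].
    destruct (adm_meet (CA X CX) Hx' Hy') as [G|Xm]; [left|right; exists X]; auto.
  - intros x y [Gx|[X [CX Xx]]] Hxy; [left; eauto|].
    destruct (adm_entl (CA X CX) (or_intror Xx) Hxy) as [G|Xy]; [left|right; exists X]; auto.
  - intros x [Gx|[X [CX Xx]]]; [auto|exact (adm_avoid (CA X CX) (or_intror Xx))].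
Qed.

Lemma exists_maximal_admissible : exists G, admissible G /\
  forall H, admissible H -> (forall x, G x -> H x) -> forall x, H x -> G x.
Proof.
  destruct (@zorn_maximal L (fun H => admissible (fun x => G0 x \/ H x)) admissible_chain_union)
    as [M [AM Mmax]].
  exists (fun x => G0 x \/ M x); split; [exact AM|].
  intros H AH MH x Hx. right. apply (Mmax H); [|intros z Mz; apply MH; right; exact Mz|exact Hx].
  replace (fun x => G0 x \/ H x) with H; [exact AH|].
  apply pred_ext; intro z; split; [auto|intros [Gz|Hz]; [exact (adm_base AH z Gz)|exact Hz]].
Qed.

Section MaximalAdmissible.
Variable G : L -> Prop.
Hypothesis AG : admissible G.
Hypothesis G_max : forall H, admissible H -> (forall x, G x -> H x) -> forall x, H x -> G x.

Lemma maximal_inhabited : exists g, G g.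
Proof. destruct G0_inhabited as [g Gg]. exists g. exact (adm_base AG g Gg). Qed.

(* Adding [c] to [G] would produce an admissible set, so it must hit [I]. *)
Lemma maximal_escape c : ~ G c -> exists g z, G g /\ I z /\ entl (lmeet L g c) z.
Proof.
  intro nGc. apply NNPP; intro no_escape.
  set (H := fun z => exists g, G g /\ entl (lmeet L g c) z).
  assert (GH : forall x, G x -> H x).
  { intros x Gx. exists x. split; [exact Gx|apply entl_of_le, lle_meetl]. }
  assert (AH : admissible H).
  { constructor.
    - intros x Gx. exact (GH x (adm_base AG x Gx)).
    - intros x y [g [Gg Hx]] [g' [Gg' Hy]]. exists (lmeet L g g').
      split; [exact (adm_meet AG Gg Gg')|apply entl_meet].
      + apply (entl_trans (y := lmeet L g c)); [|exact Hx].
        apply entl_of_le, lle_meet2; [apply lle_meetl|apply lle_refl].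
      + apply (entl_trans (y := lmeet L g' c)); [|exact Hy].
        apply entl_of_le, lle_meet2; [apply lle_meetr|apply lle_refl].
    - intros x y [g [Gg Hx]] Hxy. exists g. split; [exact Gg|eauto].
    - intros x [g [Gg Hx]] Ix. apply no_escape. exists g, x. auto. }
  apply nGc, (G_max H AH GH).
  destruct maximal_inhabited as [g Gg].
  exists g. split; [exact Gg|apply entl_of_le, lle_meetr].
Qed.

Lemma maximal_admissible_prime : prime_filter G.
Proof.
  destruct maximal_inhabited as [g Gg].
  constructor.
  - exact (adm_entl AG Gg (entl_of_le (lle_top g))).
  - intro Gbot. destruct I_inhabited as [i Ii].
    exact (adm_avoid AG Gbot (I_down (lle_bot i) Ii)).
  - intros x y Hxy Gx. exact (adm_entl AG Gx (entl_of_le Hxy)).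
  - exact (adm_meet AG).
  - intros c d Gcd. apply NNPP; intro nGcd. apply not_or_and in nGcd as [nGc nGd].
    destruct (maximal_escape c nGc) as [h [z [Gh [Iz Hz]]]].
    destruct (maximal_escape d nGd) as [h' [z' [Gh' [Iz' Hz']]]].
    set (k := lmeet L h h').
    assert (Hc : entl (lmeet L k c) (ljoin L z z')).
    { apply (entl_trans (y := lmeet L h c)).
      - apply entl_of_le, lle_meet2; [apply lle_meetl|apply lle_refl].
      - apply (entl_trans (y := z)); [exact Hz|apply entl_of_le, lle_joinl]. }
    assert (Hd : entl (lmeet L k d) (ljoin L z z')).
    { apply (entl_trans (y := lmeet L h' d)).
      - apply entl_of_le, lle_meet2; [apply lle_meetr|apply lle_refl].
      - apply (entl_trans (y := z')); [exact Hz'|apply entl_of_le, lle_joinr]. }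
    apply (adm_avoid AG (x := ljoin L z z')); [|exact (I_join Iz Iz')].
    apply (adm_entl AG (adm_meet AG (adm_meet AG Gh Gh') Gcd)).
    rewrite lmeet_joinDr. exact (entl_join Hc Hd).
Qed.

End MaximalAdmissible.

Lemma prime_filter_extension : exists G, prime_filter G /\ (forall x, G0 x -> G x) /\
  (forall x, G x -> ~ I x) /\ (forall x y, G x -> entl x y -> G y).
Proof.
  destruct exists_maximal_admissible as [G [AG G_max]].
  exists G. split; [exact (maximal_admissible_prime G AG G_max)|].
  split; [exact (adm_base AG)|split; [exact (adm_avoid AG)|exact (adm_entl AG)]].
Qed.

End FilterExtension.

Section WHBTheory.
Context {A : WHB}.
Implicit Types a b c : A.
Implicit Types F G : A -> Prop.

Lemma imp_antitone_l {a a'} b : lle a a' -> lle (imp A a' b) (imp A a b).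
Proof.
  intro H. apply lleE in H. simpl in H.
  replace (imp A a' b) with (meet A (imp A a b) (imp A a' b)) by (rewrite <- imp_join, H; reflexivity).
  apply lle_meetl.
Qed.

Lemma imp_monotone_r a {b b'} : lle b b' -> lle (imp A a b) (imp A a b').
Proof.
  intro H. unfold lle in H; simpl in H.
  replace (imp A a b) with (meet A (imp A a b) (imp A a b')) by (rewrite <- imp_meet, H; reflexivity).
  apply lle_meetr.
Qed.

Lemma imp_of_le {a b} : lle a b -> imp A a b = one A.
Proof.
  intro H. apply lle_anti; [apply lle_top|].
  rewrite <- (imp_refl A a). apply imp_monotone_r, H.
Qed.

Lemma imp_le_trans a b c : lle (meet A (imp A a b) (imp A b c)) (imp A a c).
Proof. apply imp_trans. Qed.

Lemma coimp_monotone_l {a a'} b : lle a a' -> lle (coimp A a b) (coimp A a' b).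
Proof.
  intro H. apply lleE in H. simpl in H.
  replace (coimp A a' b) with (join A (coimp A a b) (coimp A a' b)) by (rewrite <- coimp_join, H; reflexivity).
  apply lle_joinl.
Qed.

Lemma coimp_antitone_r a {b b'} : lle b b' -> lle (coimp A a b') (coimp A a b).
Proof.
  intro H. unfold lle in H; simpl in H.
  replace (coimp A a b) with (join A (coimp A a b) (coimp A a b')) by (rewrite <- coimp_meet, H; reflexivity).
  apply lle_joinr.
Qed.

Lemma coimp_of_le {a b} : lle a b -> coimp A a b = zero A.
Proof.
  intro H. apply lle_anti; [|apply lle_bot].
  rewrite <- (coimp_refl A b). apply coimp_monotone_l, H.
Qed.

Lemma coimp_le_trans a b c : lle (coimp A a c) (join A (coimp A a b) (coimp A b c)).
Proof. apply coimp_trans. Qed.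

Definition canon_rel F G := forall a b, F (imp A a b) -> G a -> G b.

Lemma canon_rel_coimp {F G} : prime_filter F -> prime_filter G -> canon_rel F G ->
  forall a b, F a -> ~ F b -> G (coimp A a b).
Proof.
  intros PF PG FG a b Fa nFb.
  assert (Fj : F (join A b (imp A (one A) (coimp A a b)))) by exact (pf_up PF (ax_dmp A a b) Fa).
  destruct (pf_prime PF Fj) as [Fb|Fi]; [contradiction|].
  exact (FG _ _ Fi (pf_top PG)).
Qed.

Lemma canon_rel_of_coimp {F G} : prime_filter F -> prime_filter G ->
  (forall a b, F a -> ~ F b -> G (coimp A a b)) -> canon_rel F G.
Proof.
  intros PF PG FG a b Fab Ga.
  assert (G (coimp A (imp A a b) (zero A))) by exact (FG _ _ Fab (pf_bot PF)).
  apply (pf_up PG (ax_mp A a b)). exact (pf_meet PG Ga H).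
Qed.


Lemma successor_extension {F} (G0 I : A -> Prop) : prime_filter F ->
  (exists g, G0 g) -> (forall x y, G0 x -> G0 y -> G0 (meet A x y)) ->
  (forall x y, G0 x -> F (imp A x y) -> G0 y) ->
  (exists i, I i) -> (forall x y, lle x y -> I y -> I x) ->
  (forall x y, I x -> I y -> I (join A x y)) -> (forall x, G0 x -> ~ I x) ->
  exists G, prime_filter G /\ (forall x, G0 x -> G x) /\ (forall x, G x -> ~ I x) /\
    canon_rel F G.
Proof.
  intros PF; intros.
  destruct (@prime_filter_extension (whb_lattice A) (fun x y => F (imp A x y)))
    with (G0 := G0) (I := I) as [G [PG [HG0 [HI HF]]]]; auto.
  - intros x y Hxy. simpl. rewrite (imp_of_le Hxy). exact (pf_top PF).
  - intros x y z Hxy Hyz. exact (pf_up PF (imp_le_trans x y z) (pf_meet PF Hxy Hyz)).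
  - intros x y y' Hy Hy'. simpl. rewrite imp_meet. exact (pf_meet PF Hy Hy').
  - intros x x' z Hx Hx'. simpl. rewrite imp_join. exact (pf_meet PF Hx Hx').
  - exists G. split; [exact PG|split; [exact HG0|split; [exact HI|]]].
    intros x y Fxy Gx. exact (HF x y Gx Fxy).
Qed.

Lemma prime_filter_separation (G0 I : A -> Prop) :
  (exists g, G0 g) -> (forall x y, G0 x -> G0 y -> G0 (meet A x y)) ->
  (forall x y, G0 x -> lle x y -> G0 y) ->
  (exists i, I i) -> (forall x y, lle x y -> I y -> I x) ->
  (forall x y, I x -> I y -> I (join A x y)) -> (forall x, G0 x -> ~ I x) ->
  exists G, prime_filter G /\ (forall x, G0 x -> G x) /\ (forall x, G x -> ~ I x).
Proof.
  intros.
  destruct (@prime_filter_extension (whb_lattice A) lle) with (G0 := G0) (I := I)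
    as [G [PG [HG0 [HI _]]]]; eauto using lle_trans, lle_meet, lle_join.
Qed.

(* The predecessor is the complement of a prime filter of the dual lattice, built
   with the dual of the consequence relation [x |- y] iff [y <- x] is not in [G]. *)
Lemma predecessor_extension {G} (J0 F0 : A -> Prop) : prime_filter G ->
  (exists j, J0 j) -> (forall x y, J0 x -> J0 y -> J0 (join A x y)) ->
  (forall x y, J0 x -> ~ G (coimp A y x) -> J0 y) ->
  (exists f, F0 f) -> (forall x y, lle x y -> F0 x -> F0 y) ->
  (forall x y, F0 x -> F0 y -> F0 (meet A x y)) -> (forall x, J0 x -> ~ F0 x) ->
  exists F, prime_filter F /\ (forall x, F0 x -> F x) /\ (forall x, F x -> ~ J0 x) /\
    canon_rel F G.
Proof.
  intros PG J0_inh J0_join J0_entl F0_inh F0_up F0_meet disj.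
  destruct (@prime_filter_extension (dual_lattice (whb_lattice A)) (fun x y => ~ G (coimp A y x)))
    with (G0 := J0) (I := F0) as [J [PJ [HJ0 [HF0 HG]]]]; auto.
  - intros x y Hxy. apply lle_dual in Hxy. rewrite (coimp_of_le Hxy). exact (pf_bot PG).
  - intros x y z Hxy Hyz Gzx.
    destruct (pf_prime PG (pf_up PG (coimp_le_trans z y x) Gzx)); tauto.
  - intros x y y' Hy Hy' G_yy'x. simpl in G_yy'x. rewrite coimp_join in G_yy'x.
    destruct (pf_prime PG G_yy'x); tauto.
  - intros x x' z Hx Hx' G_zxx'. simpl in G_zxx'. rewrite coimp_meet in G_zxx'.
    destruct (pf_prime PG G_zxx'); tauto.
  - intros x y Hxy. apply lle_dual in Hxy. exact (F0_up y x Hxy).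
  - assert (PF : prime_filter (L := whb_lattice A) (fun x => ~ J x)).
    { constructor.
      - exact (pf_bot PJ).
      - intro nJ1. exact (nJ1 (pf_top PJ)).
      - intros x y Hxy nJx Jy. apply nJx, (pf_up PJ (x := y)); [apply lle_dual, Hxy|exact Jy].
      - intros x y nJx nJy Jxy. apply (pf_prime PJ) in Jxy. tauto.
      - intros x y nJxy. apply NNPP; intro H. apply nJxy, (pf_meet PJ); apply NNPP; tauto. }
    exists (fun x => ~ J x). split; [exact PF|split; [|split]].
    + intros x F0x Jx. exact (HF0 x Jx F0x).
    + intros x nJx J0x. exact (nJx (HJ0 x J0x)).
    + apply (canon_rel_of_coimp PF PG). intros x y nJx nnJy. apply NNPP; intro nG.
      apply nJx, (HG y x); [apply NNPP, nnJy|exact nG].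
Qed.

Lemma imp_refuter {F a b} : prime_filter F -> ~ F (imp A a b) ->
  exists G, prime_filter G /\ canon_rel F G /\ G a /\ ~ G b.
Proof.
  intros PF nFab.
  destruct (successor_extension (fun z => F (imp A a z)) (fun z => lle z b) PF)
    as [G [PG [HG0 [HI FG]]]].
  - exists a. rewrite imp_refl. exact (pf_top PF).
  - intros x y Hx Hy. rewrite imp_meet. exact (pf_meet PF Hx Hy).
  - intros x y Hx Hxy. exact (pf_up PF (imp_le_trans a x y) (pf_meet PF Hx Hxy)).
  - exists b. apply lle_refl.
  - intros x y Hxy Hyb. exact (lle_trans Hxy Hyb).
  - intros x y; apply lle_join.
  - intros x Hx Hxb. exact (nFab (pf_up PF (imp_monotone_r a Hxb) Hx)).
  - exists G. split; [exact PG|split; [exact FG|split]].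
    + apply HG0. rewrite imp_refl. exact (pf_top PF).
    + intro Gb. exact (HI b Gb (lle_refl b)).
Qed.

Lemma coimp_witness {G a b} : prime_filter G -> G (coimp A a b) ->
  exists F, prime_filter F /\ canon_rel F G /\ F a /\ ~ F b.
Proof.
  intros PG Gab.
  destruct (predecessor_extension (fun z => ~ G (coimp A z b)) (fun z => lle a z) PG)
    as [F [PF [HF0 [HJ0 FG]]]].
  - exists b. rewrite coimp_refl. exact (pf_bot PG).
  - intros x y Hx Hy Gxyb. rewrite coimp_join in Gxyb.
    destruct (pf_prime PG Gxyb); tauto.
  - intros x y Hx Hyx Gyb.
    destruct (pf_prime PG (pf_up PG (coimp_le_trans y x b) Gyb)); tauto.
  - exists a. apply lle_refl.
  - intros x y Hxy Hax. exact (lle_trans Hax Hxy).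
  - intros x y; apply lle_meet.
  - intros x Hx Hax. exact (Hx (pf_up PG (coimp_monotone_l b Hax) Gab)).
  - exists F. split; [exact PF|split; [exact FG|split]].
    + exact (HF0 a (lle_refl a)).
    + intro Fb. apply (HJ0 b Fb). rewrite coimp_refl. exact (pf_bot PG).
Qed.

Lemma prime_filter_separating {a b} : ~ lle a b -> exists Z, prime_filter Z /\ Z a /\ ~ Z b.
Proof.
  intro nab.
  destruct (prime_filter_separation (fun z => lle a z) (fun z => lle z b))
    as [Z [PZ [Ha Hb]]].
  - exists a. apply lle_refl.
  - intros x y; apply lle_meet.
  - intros x y Hax Hxy. exact (lle_trans Hax Hxy).
  - exists b. apply lle_refl.
  - intros x y Hxy Hyb. exact (lle_trans Hxy Hyb).
  - intros x y; apply lle_join.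
  - intros x Hax Hxb. exact (nab (lle_trans Hax Hxb)).
  - exists Z. split; [exact PZ|split; [exact (Ha a (lle_refl a))|]].
    intro Zb. exact (Hb b Zb (lle_refl b)).
Qed.

Lemma prime_filters_separate {a b} : a <> b -> exists Z, prime_filter Z /\ ~ (Z a <-> Z b).
Proof.
  intro nab.
  destruct (classic (lle a b)) as [Hab|nHab].
  - assert (nHba : ~ lle b a) by (intro Hba; exact (nab (lle_anti Hab Hba))).
    destruct (prime_filter_separating nHba) as [Z [PZ [Zb nZa]]].
    exists Z. split; [exact PZ|tauto].
  - destruct (prime_filter_separating nHab) as [Z [PZ [Za nZb]]].
    exists Z. split; [exact PZ|tauto].
Qed.

End WHBTheory.

Section ComplexAlgebra.
Context {W : Type} (R : W -> W -> Prop).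

Definition cx_imp (P Q : W -> Prop) : W -> Prop :=
  fun w => forall w', R w w' -> P w' -> Q w'.
Definition cx_coimp (P Q : W -> Prop) : W -> Prop :=
  fun w => exists w', R w' w /\ P w' /\ ~ Q w'.

Definition complex_algebra : WHB.
Proof.
  refine (@Build_WHB (W -> Prop) (fun P Q w => P w /\ Q w) (fun P Q w => P w \/ Q w)
            cx_imp cx_coimp (fun _ => False) (fun _ => True)
            _ _ _ _ _ _ _ _ _ _ _ _ _ _ _ _ _ _ _);
    intros; apply pred_ext; intro w; unfold cx_imp, cx_coimp; try (firstorder; fail).
  - split; [|firstorder].
    intros [w' [Rw' [Hw' nbc]]]. apply not_and_or in nbc. firstorder.
  - split; [firstorder|].
    intros [w' [Rw' [Hw' nc]]]. split; [exists w'; auto|].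
    destruct (classic (b w')); [right|left]; exists w'; auto.
  - split; [firstorder|]. intro Hw. split; [exact Hw|].
    destruct (classic (b w)); [left; assumption|right].
    intros w' Rw' _. exists w. auto.
Defined.

End ComplexAlgebra.

Section Agreement.
Context {Y : Type} (Y0 : Y -> Prop).

Definition term_over (t : term Y) := forall y, occurs y t -> Y0 y.

Lemma term_over_node {t s} : term_over t -> term_over s ->
  forall y, occurs y t \/ occurs y s -> Y0 y.
Proof. intros Ht Hs y [H|H]; auto. Qed.

Lemma term_over_one : term_over tone.
Proof. intros y []. Qed.

Lemma term_over_zero : term_over tzero.
Proof. intros y []. Qed.

Definition agree {B1 B2 : WHB} (u1 : Y -> B1) (u2 : Y -> B2) (X1 : B1 -> Prop) (X2 : B2 -> Prop) :=
  forall t, term_over t -> (X1 (eval B1 u1 t) <-> X2 (eval B2 u2 t)).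

Lemma agree_sym {B1 B2 : WHB} (u1 : Y -> B1) (u2 : Y -> B2) X1 X2 :
  agree u1 u2 X1 X2 -> agree u2 u1 X2 X1.
Proof. intros H t Ht. symmetry. exact (H t Ht). Qed.

Context {B1 B2 : WHB} (u1 : Y -> B1) (u2 : Y -> B2).

Lemma agree_successor X1 X2 G : prime_filter X1 -> prime_filter X2 -> agree u1 u2 X1 X2 ->
  prime_filter G -> canon_rel X1 G ->
  exists G', prime_filter G' /\ canon_rel X2 G' /\ agree u1 u2 G G'.
Proof.
  intros PX1 PX2 Ag PG X1G.
  destruct (successor_extension
              (fun z => exists t, term_over t /\ G (eval B1 u1 t) /\ X2 (imp B2 (eval B2 u2 t) z))
              (fun z => exists s, term_over s /\ ~ G (eval B1 u1 s) /\ lle z (eval B2 u2 s)) PX2)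
    as [G' [PG' [HG0 [HI X2G']]]].
  - exists (one B2), tone. split; [apply term_over_one|split; [exact (pf_top PG)|]].
    simpl. rewrite imp_refl. exact (pf_top PX2).
  - intros x y [t [Ht [Gt Xt]]] [t' [Ht' [Gt' Xt']]]. exists (tmeet t t').
    split; [exact (term_over_node Ht Ht')|split; [exact (pf_meet PG Gt Gt')|]].
    simpl. rewrite imp_meet. apply (pf_meet PX2).
    + exact (pf_up PX2 (imp_antitone_l x (lle_meetl _ _)) Xt).
    + exact (pf_up PX2 (imp_antitone_l y (lle_meetr _ _)) Xt').
  - intros x y [t [Ht [Gt Xt]]] Xxy. exists t. split; [exact Ht|split; [exact Gt|]].
    exact (pf_up PX2 (imp_le_trans _ _ _) (pf_meet PX2 Xt Xxy)).
  - exists (zero B2), tzero. split; [apply term_over_zero|split; [exact (pf_bot PG)|apply lle_refl]].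
  - intros x y Hxy [s [Hs [Gs Hy]]]. exists s. split; [exact Hs|split; [exact Gs|exact (lle_trans Hxy Hy)]].
  - intros x y [s [Hs [Gs Hx]]] [s' [Hs' [Gs' Hy]]]. exists (tjoin s s').
    split; [exact (term_over_node Hs Hs')|split].
    + simpl. intro Gj. destruct (pf_prime PG Gj); contradiction.
    + exact (lle_join2 Hx Hy).
  - (* [X2] contains the value of [t -> s], hence so does [X1], and [G] is an [X1]-successor. *)
    intros x [t [Ht [Gt Xt]]] [s [Hs [Gs Hx]]].
    assert (X2ts : X2 (eval B2 u2 (timp t s))) by exact (pf_up PX2 (imp_monotone_r _ Hx) Xt).
    apply (Ag (timp t s) (term_over_node Ht Hs)) in X2ts.
    exact (Gs (X1G _ _ X2ts Gt)).
  - exists G'. split; [exact PG'|split; [exact X2G'|]].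
    intros t Ht. split.
    + intro Gt. apply HG0. exists t. split; [exact Ht|split; [exact Gt|]].
      rewrite imp_refl. exact (pf_top PX2).
    + intro G't. apply NNPP; intro nGt.
      exact (HI _ G't (ex_intro _ t (conj Ht (conj nGt (lle_refl _))))).
Qed.

Lemma agree_predecessor X1 X2 F : prime_filter X1 -> prime_filter X2 -> agree u1 u2 X1 X2 ->
  prime_filter F -> canon_rel F X1 ->
  exists F', prime_filter F' /\ canon_rel F' X2 /\ agree u1 u2 F F'.
Proof.
  intros PX1 PX2 Ag PF FX1.
  destruct (predecessor_extension
              (fun z => exists s, term_over s /\ ~ F (eval B1 u1 s) /\ ~ X2 (coimp B2 z (eval B2 u2 s)))
              (fun z => exists t, term_over t /\ F (eval B1 u1 t) /\ lle (eval B2 u2 t) z) PX2)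
    as [F' [PF' [HF0 [HJ F'X2]]]].
  - exists (zero B2), tzero. split; [apply term_over_zero|split; [exact (pf_bot PF)|]].
    simpl. rewrite coimp_refl. exact (pf_bot PX2).
  - intros x y [s [Hs [Fs Xs]]] [s' [Hs' [Fs' Xs']]]. exists (tjoin s s').
    split; [exact (term_over_node Hs Hs')|split].
    + simpl. intro Fj. destruct (pf_prime PF Fj); contradiction.
    + simpl. rewrite coimp_join. intro Xj. destruct (pf_prime PX2 Xj) as [Xj1|Xj2].
      * exact (Xs (pf_up PX2 (coimp_antitone_r x (lle_joinl _ _)) Xj1)).
      * exact (Xs' (pf_up PX2 (coimp_antitone_r y (lle_joinr _ _)) Xj2)).
  - intros x y [s [Hs [Fs Xs]]] nXyx. exists s. split; [exact Hs|split; [exact Fs|]].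
    intro Xys. destruct (pf_prime PX2 (pf_up PX2 (coimp_le_trans y x _) Xys)); contradiction.
  - exists (one B2), tone. split; [apply term_over_one|split; [exact (pf_top PF)|apply lle_refl]].
  - intros x y Hxy [t [Ht [Ft Hx]]]. exists t. split; [exact Ht|split; [exact Ft|exact (lle_trans Hx Hxy)]].
  - intros x y [t [Ht [Ft Hx]]] [t' [Ht' [Ft' Hy]]]. exists (tmeet t t').
    split; [exact (term_over_node Ht Ht')|split; [exact (pf_meet PF Ft Ft')|exact (lle_meet2 Hx Hy)]].
  - (* [X1] contains the value of [t <- s] since [F] is an [X1]-predecessor, hence so does [X2]. *)
    intros x [s [Hs [Fs Xs]]] [t [Ht [Ft Hx]]].
    assert (X1ts : X1 (eval B1 u1 (tcoimp t s))) by exact (canon_rel_coimp PF PX1 FX1 _ _ Ft Fs).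
    apply (Ag (tcoimp t s) (term_over_node Ht Hs)) in X1ts.
    exact (Xs (pf_up PX2 (coimp_monotone_l _ Hx) X1ts)).
  - exists F'. split; [exact PF'|split; [exact F'X2|]].
    intros t Ht. split.
    + intro Ft. exact (HF0 _ (ex_intro _ t (conj Ht (conj Ft (lle_refl _))))).
    + intro F't. apply NNPP; intro nFt. apply (HJ _ F't). exists t.
      split; [exact Ht|split; [exact nFt|]]. rewrite coimp_refl. exact (pf_bot PX2).
Qed.

End Agreement.

Arguments agree_sym {Y Y0 B1 B2 u1 u2 X1 X2}.
Arguments agree_successor {Y Y0 B1 B2 u1 u2 X1 X2 G}.
Arguments agree_predecessor {Y Y0 B1 B2 u1 u2 X1 X2 F}.

Section Lindenbaum.
Context {Y : Type} (Sigma : eqn Y -> Prop).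

Definition sigma_equiv (t s : term Y) :=
  forall (B : WHB) (u : Y -> B), (forall e, Sigma e -> sat B u e) -> eval B u t = eval B u s.

Definition lind_car := {P : term Y -> Prop | exists t, P = sigma_equiv t}.

Definition lind (t : term Y) : lind_car := exist _ (sigma_equiv t) (ex_intro _ t eq_refl).

Lemma lind_eq {t s} : sigma_equiv t s -> lind t = lind s.
Proof.
  intro Hts. unfold lind. generalize (ex_intro (fun t' => sigma_equiv t = sigma_equiv t') t eq_refl).
  replace (sigma_equiv t) with (sigma_equiv s); [intro; f_equal; apply proof_irrelevance|].
  apply pred_ext; intro r; split; intros H B u Hu.
  - rewrite (Hts B u Hu). exact (H B u Hu).
  - rewrite <- (Hts B u Hu). exact (H B u Hu).
Qed.

Lemma lind_inj {t s} : lind t = lind s -> sigma_equiv t s.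
Proof.
  intro E. apply (f_equal (@proj1_sig _ _)) in E. simpl in E.
  rewrite E. intros B u _. reflexivity.
Qed.

Definition lrep (P : lind_car) : term Y :=
  proj1_sig (constructive_indefinite_description _ (proj2_sig P)).

Lemma lind_rep P : lind (lrep P) = P.
Proof.
  destruct P as [P HP]. unfold lrep, lind; simpl.
  destruct (constructive_indefinite_description _ HP) as [t Ht]; simpl.
  subst P. f_equal. apply proof_irrelevance.
Qed.

Lemma lind_surj P : exists t, P = lind t.
Proof. exists (lrep P). symmetry. apply lind_rep. Qed.

Definition lop (op : term Y -> term Y -> term Y) (P Q : lind_car) := lind (op (lrep P) (lrep Q)).

Lemma lop_lind op t s :
  (forall B u t t' s s', eval B u t = eval B u t' -> eval B u s = eval B u s' ->
     eval B u (op t s) = eval B u (op t' s')) ->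
  lop op (lind t) (lind s) = lind (op t s).
Proof.
  intro op_compat. apply lind_eq. intros B u Hu. apply op_compat.
  - apply (lind_inj (lind_rep (lind t)) B u Hu).
  - apply (lind_inj (lind_rep (lind s)) B u Hu).
Qed.

Ltac lind_reduce :=
  repeat match goal with P : lind_car |- _ => let t := fresh "t" in destruct (lind_surj P) as [t ->] end;
  repeat rewrite lop_lind by (intros ? ? ? ? ? ? E1 E2; simpl; rewrite E1, E2; reflexivity);
  apply lind_eq; intros B u _; simpl.

Definition lindenbaum : WHB.
Proof.
  refine (@Build_WHB lind_car (lop (@tmeet Y)) (lop (@tjoin Y)) (lop (@timp Y)) (lop (@tcoimp Y)) (lind tzero) (lind tone)
            _ _ _ _ _ _ _ _ _ _ _ _ _ _ _ _ _ _ _); intros; lind_reduce;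
  first [apply meetA | apply joinA | apply meetC | apply joinC | apply meet_absorb
        | apply join_absorb | apply meet_join_distr | apply meet0 | apply join1 | apply imp_refl
        | apply imp_meet | apply imp_join | apply imp_trans | apply coimp_refl | apply coimp_join
        | apply coimp_meet | apply coimp_trans | apply ax_mp | apply ax_dmp].
Defined.

Definition lind_var (y : Y) : lindenbaum := lind (tvar y).

Lemma eval_lind t : eval lindenbaum lind_var t = lind t.
Proof.
  induction t; simpl; try reflexivity; rewrite IHt1, IHt2;
    apply lop_lind; intros ? ? ? ? ? ? E1 E2; simpl; rewrite E1, E2; reflexivity.
Qed.

End Lindenbaum.

Section Interpolation.
Context {Y : Type} (Sigma Gamma : eqn Y -> Prop) (eps : eqn Y).

Definition common_var (y : Y) := Var Sigma y /\ Var (setU Gamma (set1 eps)) y.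

Definition interpolant (e : eqn Y) : Prop :=
  term_over common_var (fst e) /\ term_over common_var (snd e) /\ sigma_equiv Sigma (fst e) (snd e).

Section CanonicalModel.
Variables (A : WHB) (v : Y -> A).
Hypothesis v_interpolant : forall e, interpolant e -> sat A v e.

Local Notation LS := (lindenbaum Sigma).
Local Notation vS := (lind_var Sigma).

Record point := {
  pt_lind : LS -> Prop;
  pt_alg : A -> Prop;
  pt_lind_prime : prime_filter pt_lind;
  pt_alg_prime : prime_filter pt_alg;
  pt_agree : agree common_var vS v pt_lind pt_alg
}.

Definition point_rel (p q : point) :=
  canon_rel (pt_lind p) (pt_lind q) /\ canon_rel (pt_alg p) (pt_alg q).

Definition canonical_model : WHB := complex_algebra point_rel.

Definition canonical_val (y : Y) : canonical_model :=
  fun p => (Var Sigma y /\ pt_lind p (vS y)) \/ (~ Var Sigma y /\ pt_alg p (v y)).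

Lemma point_imp_lind p a b :
  (forall q, point_rel p q -> pt_lind q a -> pt_lind q b) <-> pt_lind p (imp LS a b).
Proof.
  split; [|intros Hab q [Rq _] Ha; exact (Rq _ _ Hab Ha)].
  intro H. apply NNPP; intro nab.
  destruct (imp_refuter (pt_lind_prime p) nab) as [G [PG [RG [Ga nGb]]]].
  destruct (agree_successor (pt_lind_prime p) (pt_alg_prime p) (pt_agree p) PG RG)
    as [Z [PZ [RZ AgZ]]].
  exact (nGb (H (Build_point G Z PG PZ AgZ) (conj RG RZ) Ga)).
Qed.

Lemma point_coimp_lind p a b :
  (exists q, point_rel q p /\ pt_lind q a /\ ~ pt_lind q b) <-> pt_lind p (coimp LS a b).
Proof.
  split.
  - intros [q [[Rq _] [Ha nb]]]. exact (canon_rel_coimp (pt_lind_prime q) (pt_lind_prime p) Rq _ _ Ha nb).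
  - intro Hab.
    destruct (coimp_witness (pt_lind_prime p) Hab) as [F [PF [RF [Fa nFb]]]].
    destruct (agree_predecessor (pt_lind_prime p) (pt_alg_prime p) (pt_agree p) PF RF)
      as [Z [PZ [RZ AgZ]]].
    exists (Build_point F Z PF PZ AgZ). split; [exact (conj RF RZ)|auto].
Qed.

Lemma point_imp_alg p a b :
  (forall q, point_rel p q -> pt_alg q a -> pt_alg q b) <-> pt_alg p (imp A a b).
Proof.
  split; [|intros Hab q [_ Rq] Ha; exact (Rq _ _ Hab Ha)].
  intro H. apply NNPP; intro nab.
  destruct (imp_refuter (pt_alg_prime p) nab) as [G [PG [RG [Ga nGb]]]].
  destruct (agree_successor (pt_alg_prime p) (pt_lind_prime p) (agree_sym (pt_agree p)) PG RG)
    as [X [PX [RX AgX]]].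
  exact (nGb (H (Build_point X G PX PG (agree_sym AgX)) (conj RX RG) Ga)).
Qed.

Lemma point_coimp_alg p a b :
  (exists q, point_rel q p /\ pt_alg q a /\ ~ pt_alg q b) <-> pt_alg p (coimp A a b).
Proof.
  split.
  - intros [q [[_ Rq] [Ha nb]]]. exact (canon_rel_coimp (pt_alg_prime q) (pt_alg_prime p) Rq _ _ Ha nb).
  - intro Hab.
    destruct (coimp_witness (pt_alg_prime p) Hab) as [F [PF [RF [Fa nFb]]]].
    destruct (agree_predecessor (pt_alg_prime p) (pt_lind_prime p) (agree_sym (pt_agree p)) PF RF)
      as [X [PX [RX AgX]]].
    exists (Build_point X F PX PF (agree_sym AgX)). split; [exact (conj RX RF)|auto].
Qed.

Lemma eval_canonical_lind t : term_over (Var Sigma) t ->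
  eval canonical_model canonical_val t = fun p => pt_lind p (eval LS vS t).
Proof.
  induction t; intro Ht; simpl;
    try (rewrite IHt1, IHt2 by (intros y Hy; apply Ht; simpl; auto));
    apply pred_ext; intro p; simpl.
  - assert (Vy : Var Sigma y) by (apply Ht; reflexivity). unfold canonical_val. tauto.
  - symmetry. apply (pf_meetE (pt_lind_prime p)).
  - symmetry. apply (pf_joinE (pt_lind_prime p)).
  - apply point_imp_lind.
  - apply point_coimp_lind.
  - split; [tauto|apply (pf_bot (pt_lind_prime p))].
  - split; [intros _; apply (pf_top (pt_lind_prime p))|tauto].
Qed.

Lemma eval_canonical_alg t : term_over (Var (setU Gamma (set1 eps))) t ->
  eval canonical_model canonical_val t = fun p => pt_alg p (eval A v t).
Proof.
  induction t; intro Ht; simpl;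
    try (rewrite IHt1, IHt2 by (intros y Hy; apply Ht; simpl; auto));
    apply pred_ext; intro p; simpl.
  - unfold canonical_val. destruct (classic (Var Sigma y)) as [Vy|nVy]; [|tauto].
    assert (Cy : term_over common_var (tvar y)).
    { intros y' <-. split; [exact Vy|apply Ht; reflexivity]. }
    pose proof (pt_agree p (tvar y) Cy). simpl in *. tauto.
  - symmetry. apply (pf_meetE (pt_alg_prime p)).
  - symmetry. apply (pf_joinE (pt_alg_prime p)).
  - apply point_imp_alg.
  - apply point_coimp_alg.
  - split; [tauto|apply (pf_bot (pt_alg_prime p))].
  - split; [intros _; apply (pf_top (pt_alg_prime p))|tauto].
Qed.

(* Every prime filter of [A] is the second component of a point: its trace on the
   common-variable terms is consistent with [Sigma] because [v] satisfies the interpolant. *)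
Lemma point_of_alg_filter {Z} : prime_filter Z -> exists X, prime_filter X /\ agree common_var vS v X Z.
Proof.
  intro PZ.
  destruct (prime_filter_separation
              (fun z => exists t, term_over common_var t /\ Z (eval A v t) /\ lle (eval LS vS t) z)
              (fun z => exists s, term_over common_var s /\ ~ Z (eval A v s) /\ lle z (eval LS vS s)))
    as [X [PX [HG0 HI]]].
  - exists (one LS), tone. split; [apply term_over_one|split; [exact (pf_top PZ)|apply lle_refl]].
  - intros x y [t [Ht [Zt Hx]]] [t' [Ht' [Zt' Hy]]]. exists (tmeet t t').
    split; [exact (term_over_node _ Ht Ht')|split; [exact (pf_meet PZ Zt Zt')|exact (lle_meet2 Hx Hy)]].
  - intros x y [t [Ht [Zt Hx]]] Hxy. exists t. split; [exact Ht|split; [exact Zt|exact (lle_trans Hx Hxy)]].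
  - exists (zero LS), tzero. split; [apply term_over_zero|split; [exact (pf_bot PZ)|apply lle_refl]].
  - intros x y Hxy [s [Hs [Zs Hy]]]. exists s. split; [exact Hs|split; [exact Zs|exact (lle_trans Hxy Hy)]].
  - intros x y [s [Hs [Zs Hx]]] [s' [Hs' [Zs' Hy]]]. exists (tjoin s s').
    split; [exact (term_over_node _ Hs Hs')|split; [|exact (lle_join2 Hx Hy)]].
    simpl. intro Zj. destruct (pf_prime PZ Zj); contradiction.
  - intros x [t [Ht [Zt Hx]]] [s [Hs [Zs Hy]]].
    assert (Hts : lle (eval LS vS t) (eval LS vS s)) by exact (lle_trans Hx Hy).
    change (eval LS vS (tmeet t s) = eval LS vS t) in Hts.
    rewrite !eval_lind in Hts. apply lind_inj in Hts.
    assert (Ats : lle (eval A v t) (eval A v s))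
      by exact (v_interpolant (tmeet t s, t) (conj (term_over_node _ Ht Hs) (conj Ht Hts))).
    exact (Zs (pf_up PZ Ats Zt)).
  - exists X. split; [exact PX|]. intros t Ht. split.
    + intro Xt. apply NNPP; intro nZt. exact (HI _ Xt (ex_intro _ t (conj Ht (conj nZt (lle_refl _))))).
    + intro Zt. exact (HG0 _ (ex_intro _ t (conj Ht (conj Zt (lle_refl _))))).
Qed.

Hypothesis v_Gamma : forall e, Gamma e -> sat A v e.

Lemma canonical_model_sat e : setU Sigma Gamma e -> sat canonical_model canonical_val e.
Proof.
  intros [He|He]; unfold sat.
  - assert (Ve : forall t, (forall y, occurs y t -> occurs y (fst e) \/ occurs y (snd e)) ->
                   term_over (Var Sigma) t) by (intros t Ht y Hy; exists e; auto).
    rewrite !eval_canonical_lind by (apply Ve; auto).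
    rewrite !eval_lind, (lind_eq Sigma (fun B u Hu => Hu e He)). reflexivity.
  - assert (Ve : forall t, (forall y, occurs y t -> occurs y (fst e) \/ occurs y (snd e)) ->
                   term_over (Var (setU Gamma (set1 eps))) t)
      by (intros t Ht y Hy; exists e; split; [left; exact He|auto]).
    rewrite !eval_canonical_alg by (apply Ve; auto).
    rewrite (v_Gamma e He). reflexivity.
Qed.

Lemma interpolant_Gamma_sat_eps : entails (setU Sigma Gamma) (set1 eps) -> sat A v eps.
Proof.
  intro Hent. apply NNPP; intro neq.
  destruct (prime_filters_separate neq) as [Z [PZ nZ]].
  destruct (point_of_alg_filter PZ) as [X [PX AgX]].
  pose proof (Hent canonical_model canonical_val canonical_model_sat eps eq_refl) as Heps.
  unfold sat in Heps. rewrite !eval_canonical_alg in Heps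
    by (intros y Hy; exists eps; split; [right; reflexivity|auto]).
  pose proof (equal_f Heps (Build_point X Z PX PZ AgX)) as E. simpl in E.
  apply nZ. rewrite E. reflexivity.
Qed.

End CanonicalModel.
End Interpolation.

Theorem corollary6p29 :
  forall (Y : Type) (Sigma Gamma : eqn Y -> Prop) (eps : eqn Y),
    (exists y, Var Sigma y /\ Var (setU Gamma (set1 eps)) y) ->
    entails (setU Sigma Gamma) (set1 eps) ->
    exists Delta : eqn Y -> Prop,
      entails Sigma Delta /\
      entails (setU Delta Gamma) (set1 eps) /\
      (forall y, Var Delta y -> Var Sigma y /\ Var (setU Gamma (set1 eps)) y).
Proof.
  (* No common variable is needed: the interpolant may consist of closed equations. *)
  intros Y Sigma Gamma eps _ Hent.
  exists (interpolant Sigma Gamma eps). split; [|split].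
  - intros A v Hv e [_ [_ He]]. exact (He A v Hv).
  - intros A v Hv e ->.
    apply (interpolant_Gamma_sat_eps Sigma Gamma eps A v); [| |exact Hent].
    + intros e He. apply Hv. left. exact He.
    + intros e He. apply Hv. right. exact He.
  - intros y [e [[Hfst [Hsnd _]] [Hy|Hy]]]; [apply Hfst|apply Hsnd]; exact Hy.
Qed.
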